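(* $\mathsf{Cof}(\mathbb{J})\subseteq\mathsf{Cof}(\mathbb{I})\cap\mathbb{W}$.
   Context: $p\mathsf{Ch}^*_\mathbb{Q}=\mathsf{Fun}([0,\infty),\mathsf{Ch}^*_\mathbb{Q})$, non-negatively graded rational cochain complexes. $S^k=\mathbb{Q}$ in degree $k$; $D^k$ ($k\ge1$) is $\mathbb{Q}$ in degrees $k-1,k$ with identity differential; $D^0=0$. For $0\le s<t<\infty$, $\mathbb{S}^k_{[s,t)}$ is $0$ at $r<s$, $S^k$ at $s\le r<t$, $D^k$ at $r\ge t$; $\mathbb{S}^k_{[s,\infty)}$ is $0$ at $r<s$, $S^k$ at $r\ge s$; $\mathbb{D}^k_s$ is $0$ at $r<s$, $D^k$ at $r\ge s$. $\mathbb{I}=\{\mathbb{S}^k_{[s,t)}\to\mathbb{D}^k_s: k\in\mathbb{N},\ 0\le s<t\le\infty\}$, $\mathbb{J}=\{\mathbb{D}^k_t\to\mathbb{D}^k_s: 0\le s<t<\infty\}\cup\{0\to\mathbb{D}^k_s\}$. For a set of maps $K$, $\mathsf{Cof}(K)$ is the class of maps with the left lifting property with respect to all maps having the right lifting property with respect to $K$. $\mathbb{W}$ is the class of pointwise quasi-isomorphisms. *)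

From HB Require Import structures.
From mathcomp Require Import all_boot all_order all_algebra.
From mathcomp Require Import reals.
From mathcomp Require Import lra zify.
Unset Printing Implicit Defensive.
Import Order.TTheory GRing.Theory Num.Theory.
Local Open Scope ring_scope.

Definition Rp (R : realType) := {r : R | 0 <= r}.

(** Objects of pCh^*_Q = Fun([0,oo), Ch^*_Q): at each r and each degree n >= 0 a
    Q-vector space, a cochain differential (d o d = 0), and structure maps
    for r <= s, functorial and commuting with the differentials. *)
Record pcc (R : realType) := PCC {
  pV : Rp R -> nat -> lmodType rat;
  pd : forall r n, pV r n -> pV r n.+1;
  pd_lin : forall r n, linear (@pd r n);
  pdd : forall r n x, pd r n.+1 (pd r n x) = 0;
  ptr : forall (r s : Rp R) n, val r <= val s -> pV r n -> pV s n;
  ptr_lin : forall r s n h, linear (@ptr r s n h);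
  ptr_id : forall r n (h : val r <= val r) x, @ptr r r n h x = x;
  ptr_comp : forall r s t n (h1 : val r <= val s) (h2 : val s <= val t)
              (h3 : val r <= val t) x,
      @ptr s t n h2 (@ptr r s n h1 x) = @ptr r t n h3 x;
  ptr_d : forall r s n (h : val r <= val s) x,
      pd s n (@ptr r s n h x) = @ptr r s n.+1 h (pd r n x) }.

Arguments pV {R} X r n : rename.
Arguments pd {R} X r n x : rename.
Arguments ptr {R} X {r s} n h x : rename.

Record phom (R : realType) (X Y : pcc R) := PHom {
  phf : forall r n, pV X r n -> pV Y r n;
  phf_lin : forall r n, linear (phf r n);
  phf_d : forall r n x, phf r n.+1 (pd X r n x) = pd Y r n (phf r n x);
  phf_tr : forall r s n (h : val r <= val s) x,
      phf s n (ptr X n h x) = ptr Y n h (phf r n x) }.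

Arguments phom {R} X Y.
Arguments phf {R X Y} h {r n} x : rename.
Arguments PHom {R X Y} phf phf_lin phf_d phf_tr.

Definition llp {R : realType} {A B X Y : pcc R} (i : phom A B) (p : phom X Y) :=
  forall (u : phom A X) (v : phom B Y),
    (forall r n a, phf p (phf u a) = phf v (@phf _ _ _ i r n a)) ->
    exists h : phom B X,
      (forall r n a, phf h (@phf _ _ _ i r n a) = @phf _ _ _ u r n a) /\
      (forall r n b, phf p (@phf _ _ _ h r n b) = @phf _ _ _ v r n b).

Definition mclass (R : realType) := forall X Y : pcc R, phom X Y -> Prop.

Definition RLP {R : realType} (K : mclass R) {X Y : pcc R} (p : phom X Y) :=
  forall (A B : pcc R) (i : phom A B), K A B i -> llp i p.

Definition Cof {R : realType} (K : mclass R) {A B : pcc R} (i : phom A B) :=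
  forall (X Y : pcc R) (p : phom X Y), RLP K p -> llp i p.

Definition bd {R : realType} {X : pcc R} {r : Rp R} :
  forall n, pV X r n -> Prop :=
  fun n => match n return pV X r n -> Prop with
           | 0 => fun y => y = 0
           | m.+1 => fun y => exists z : pV X r m, pd X r m z = y
           end.
Arguments bd {R X r n} y.

(** Quasi-isomorphism of cochain complexes at stage r: the induced maps
    H^n(X r) -> H^n(Y r) are bijective for all n. *)
Definition qiso_at {R : realType} {X Y : pcc R} (f : phom X Y) (r : Rp R) :=
  forall n,
    (forall y : pV Y r n, pd Y r n y = 0 ->
       exists x : pV X r n, pd X r n x = 0 /\ bd (phf f x - y)) /\
    (forall x : pV X r n, pd X r n x = 0 -> bd (phf f x) -> bd x).

Definition Wq (R : realType) : mclass R :=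
  fun X Y f => forall r : Rp R, qiso_at f r.
Arguments Wq {R} _ _ _.

Definition mx1 (a b : nat) : 'M[rat]_(a, b) := const_mx 1.

Lemma mx1_id (a : bool) (x : 'rV[rat]_a) : x *m mx1 a a = x.
Proof.
case: a x => x /=; last by rewrite [x]thinmx0 [_ *m _]thinmx0.
by apply/matrixP => i j; rewrite !mxE big_ord1 mxE mulr1 (ord1 j).
Qed.

Lemma mx1_comp (a b c : bool) (x : 'rV[rat]_a) :
  (a -> c -> b) -> x *m mx1 a b *m mx1 b c = x *m mx1 a c.
Proof.
case: c => /=; last by move=> _; rewrite [LHS]thinmx0 [RHS]thinmx0.
case: a x => x /=; last by move=> _; rewrite [x]thinmx0 !mul0mx.
move=> /(_ isT isT); case: b => // _.
rewrite -mulmxA; congr mulmx.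
by apply/matrixP => i j; rewrite !mxE big_ord1 !mxE mulr1.
Qed.

Lemma mx1_comp0 (a b c : bool) (x : 'rV[rat]_a) :
  ~~ [&& a, b & c] -> x *m mx1 a b *m mx1 b c = 0.
Proof.
case: c => /=; last by rewrite andbF => _; rewrite [LHS]thinmx0.
case: a x => x /=; last by move=> _; rewrite [x]thinmx0 !mul0mx.
by case: b => //= _; rewrite [_ *m mx1 _ 0]thinmx0 mul0mx.
Qed.

Lemma mx1_comm (a b b' c : bool) (x : 'rV[rat]_a) :
  (a -> c -> b = b') -> x *m mx1 a b *m mx1 b c = x *m mx1 a b' *m mx1 b' c.
Proof.
case ac: (a && c).
  move: ac => /andP [ha hc] /(_ ha hc) eb; rewrite -eb.
  by [].
rewrite !mx1_comp0 //; apply/negP => /and3P [ha _ hc]; by rewrite ha hc in ac.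
Qed.

Lemma mx1_lin (a b : nat) : linear (fun x : 'rV[rat]_a => x *m mx1 a b).
Proof. by move=> k x y; rewrite mulmxDl scalemxAl. Qed.

Section DimObj.
Variable R : realType.
Variable dm : Rp R -> nat -> bool.
Hypothesis Hconv : forall (r s t : Rp R) n, val r <= val s -> val s <= val t ->
  dm r n -> dm t n -> dm s n.
Hypothesis Hdd : forall r n, ~~ [&& dm r n, dm r n.+1 & dm r n.+2].
Hypothesis Htd : forall (r s : Rp R) n, val r <= val s ->
  dm r n -> dm s n.+1 -> dm r n.+1 = dm s n.

Definition dimObj : pcc R.
refine (@PCC R (fun r n => 'rV[rat]_(dm r n))
  (fun r n x => x *m mx1 (dm r n) (dm r n.+1)) (fun r n => mx1_lin _ _) _
  (fun r s n _ x => x *m mx1 (dm r n) (dm s n)) (fun r s n _ => mx1_lin _ _)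
  _ _ _).
- by move=> r n x /=; rewrite mx1_comp0.
- by move=> r n _ x /=; rewrite mx1_id.
- by move=> r s t n h1 h2 h3 x /=; rewrite mx1_comp // => ha hc; exact: (Hconv _ _ _ _ h1 h2 ha hc).
- by move=> r s n h x /=; rewrite (@mx1_comm _ (dm r n.+1) (dm s n)) // => ha hc;
     exact: (Htd _ _ _ h ha hc).
Defined.
End DimObj.
Arguments dimObj {R dm} Hconv Hdd Htd.

Section DimHom.
Variable R : realType.
Variables dX dY : Rp R -> nat -> bool.
Variables (hX1 : forall (r s t : Rp R) n, val r <= val s -> val s <= val t ->
  dX r n -> dX t n -> dX s n)
  (hX2 : forall r n, ~~ [&& dX r n, dX r n.+1 & dX r n.+2])
  (hX3 : forall (r s : Rp R) n, val r <= val s ->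
  dX r n -> dX s n.+1 -> dX r n.+1 = dX s n).
Variables (hY1 : forall (r s t : Rp R) n, val r <= val s -> val s <= val t ->
  dY r n -> dY t n -> dY s n)
  (hY2 : forall r n, ~~ [&& dY r n, dY r n.+1 & dY r n.+2])
  (hY3 : forall (r s : Rp R) n, val r <= val s ->
  dY r n -> dY s n.+1 -> dY r n.+1 = dY s n).
Hypothesis Hnt : forall (r s : Rp R) n, val r <= val s ->
  dX r n -> dY s n -> dX s n = dY r n.
Hypothesis Hnd : forall (r : Rp R) n, dX r n -> dY r n.+1 -> dX r n.+1 = dY r n.

Definition dimHom : phom (dimObj hX1 hX2 hX3) (dimObj hY1 hY2 hY3).
refine (@PHom R (dimObj hX1 hX2 hX3) (dimObj hY1 hY2 hY3)
  (fun r n x => x *m mx1 (dX r n) (dY r n)) (fun r n => mx1_lin _ _) _ _).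
- by move=> r n x /=; rewrite (@mx1_comm _ (dX r n.+1) (dY r n)) // => ha hc;
     exact: (Hnd _ _ ha hc).
- by move=> r s n h x /=; rewrite (@mx1_comm _ (dX s n) (dY r n)) // => ha hc;
     exact: (Hnt _ _ _ h ha hc).
Defined.
End DimHom.
Arguments dimHom {R dX dY hX1 hX2 hX3 hY1 hY2 hY3} Hnt Hnd.

(** Dimension functions (each stage/degree is Q or 0). *)
Section Gens.
Variable R : realType.
Implicit Types (r s t : Rp R) (k n : nat).

(* D^k_s : 0 at r < s; D^k (Q in degrees k-1, k, identity differential; D^0 = 0) at r >= s *)
Definition dD k s r n : bool :=
  (val s <= val r) && ((n == k) && (0 < k)%N || (n.+1 == k)).
(* S^k_[s,t) (t finite): 0 at r < s; S^k at s <= r < t; D^k at r >= t *)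
Definition dS k s t r n : bool :=
  (n == k) && (val s <= val r) && ((val r < val t) || (0 < k)%N)
  || (n.+1 == k) && (val t <= val r).
(* S^k_[s,oo): 0 at r < s; S^k at r >= s *)
Definition dSi k s r n : bool := (n == k) && (val s <= val r).
Definition dZ (r : Rp R) (n : nat) : bool := false.

Lemma dD_deg k s r n : dD k s r n -> (n == k) || (n.+1 == k).
Proof. by rewrite /dD => /andP[_ /orP[/andP[-> _]|->]]; rewrite ?orbT. Qed.
Lemma dS_deg k s t r n : dS k s t r n -> (n == k) || (n.+1 == k).
Proof. by rewrite /dS => /orP[/andP[/andP[-> _] _]|/andP[-> _]]; rewrite ?orbT. Qed.
Lemma dSi_deg k s r n : dSi k s r n -> n == k.
Proof. by rewrite /dSi => /andP[]. Qed.

Lemma deg3 (P : nat -> bool) k :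
  (forall n, P n -> (n == k) || (n.+1 == k)) ->
  forall n, ~~ [&& P n, P n.+1 & P n.+2].
Proof.
move=> H n; apply/negP => /and3P[/H a /H b /H c]; move: a b c.
by case: (ltngtP n k) => [nk|kn|->]; rewrite ?eqxx /=;
  do ?[case: eqP => [?|_]]; rewrite //=; lia.
Qed.

Lemma dD_conv k s (r u w : Rp R) n : val r <= val u -> val u <= val w ->
  dD k s r n -> dD k s w n -> dD k s u n.
Proof.
by rewrite /dD => ru _ /andP[sr ->] _; rewrite (le_trans sr ru).
Qed.
Lemma dD_dd k s r n : ~~ [&& dD k s r n, dD k s r n.+1 & dD k s r n.+2].
Proof. exact: (@deg3 _ k (@dD_deg k s r) n). Qed.
Lemma dD_td k s (r u : Rp R) n : val r <= val u ->
  dD k s r n -> dD k s u n.+1 -> dD k s r n.+1 = dD k s u n.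
Proof. by rewrite /dD => _ /andP[-> ->] /andP[-> ->]. Qed.
Definition Dobj k s : pcc R :=
  dimObj (@dD_conv k s) (@dD_dd k s) (@dD_td k s).

Lemma dS_conv k s t (r u w : Rp R) n : val r <= val u -> val u <= val w ->
  dS k s t r n -> dS k s t w n -> dS k s t u n.
Proof.
rewrite /dS => ru uw /orP[/andP[/andP[nk sr] c1]|/andP[nk tr]].
  move=> /orP[/andP[/andP[_ _] c2]|/andP[nk' _]]; last first.
    by move/eqP: nk nk' => ->; rewrite gtn_eqF.
  rewrite nk (le_trans sr ru) /=; case/orP: c2 => [wt|->]; last by rewrite orbT.
  by rewrite (le_lt_trans uw wt).
by move=> _; rewrite nk (le_trans tr ru) orbT.
Qed.
Lemma dS_dd k s t r n : ~~ [&& dS k s t r n, dS k s t r n.+1 & dS k s t r n.+2].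
Proof. exact: (@deg3 _ k (@dS_deg k s t r) n). Qed.
Lemma dS_td k s t (hst : val s <= val t) (r u : Rp R) n : val r <= val u ->
  dS k s t r n -> dS k s t u n.+1 -> dS k s t r n.+1 = dS k s t u n.
Proof.
move=> ru h1 h2; have nk : n.+1 = k.
  by move: (@dS_deg _ _ _ _ _ h1) (@dS_deg _ _ _ _ _ h2); do ?[case: eqP => [?|_]]; rewrite //=; lia.
subst k; move: h1 h2.
rewrite /dS !eqxx !(ltn_eqF (ltnSn _)) !(gtn_eqF (ltnSn _)) /= => tr _.
have tu : val t <= val u := le_trans tr ru.
have sr : val s <= val r := le_trans hst tr.
by rewrite [X in _ = X]tu orbF sr orbT.
Qed.
Definition Sobj k s t (hst : val s <= val t) : pcc R :=
  dimObj (@dS_conv k s t) (@dS_dd k s t) (@dS_td k s t hst).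

Lemma dSi_conv k s (r u w : Rp R) n : val r <= val u -> val u <= val w ->
  dSi k s r n -> dSi k s w n -> dSi k s u n.
Proof. by rewrite /dSi => ru _ /andP[-> sr] _; rewrite (le_trans sr ru). Qed.
Lemma dSi_dd k s r n : ~~ [&& dSi k s r n, dSi k s r n.+1 & dSi k s r n.+2].
Proof.
apply/negP => /and3P[/dSi_deg/eqP a /dSi_deg/eqP b _]; lia.
Qed.
Lemma dSi_td k s (r u : Rp R) n : val r <= val u ->
  dSi k s r n -> dSi k s u n.+1 -> dSi k s r n.+1 = dSi k s u n.
Proof. by move=> _ /dSi_deg/eqP a /dSi_deg/eqP b; exfalso; lia. Qed.
Definition Siobj k s : pcc R :=
  dimObj (@dSi_conv k s) (@dSi_dd k s) (@dSi_td k s).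

Lemma dZ_conv (r u w : Rp R) n : val r <= val u -> val u <= val w ->
  dZ r n -> dZ w n -> dZ u n.
Proof. by []. Qed.
Lemma dZ_dd r n : ~~ [&& dZ r n, dZ r n.+1 & dZ r n.+2].
Proof. by []. Qed.
Lemma dZ_td (r u : Rp R) n : val r <= val u ->
  dZ r n -> dZ u n.+1 -> dZ r n.+1 = dZ u n.
Proof. by []. Qed.
Definition Zobj : pcc R := dimObj dZ_conv dZ_dd dZ_td.

Ltac dnorm := rewrite /dS /dD /dSi /dZ ?eqxx ?(ltn_eqF (ltnSn _)) ?(gtn_eqF (ltnSn _)) /=
  ?andbT ?andbF ?orbF ?orbT ?ltn0Sn ?andbT ?orbT.

Lemma I_nt k s t (hst : val s <= val t) (r u : Rp R) n : val r <= val u ->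
  dS k s t r n -> dD k s u n -> dS k s t u n = dD k s r n.
Proof.
move=> ru h1 h2; case/orP: (@dS_deg _ _ _ _ _ h1) => /eqP nk; subst k;
  move: h1 h2; dnorm.
  by move=> /andP[sr _] /andP[su n0]; rewrite su sr n0 orbT.
by move=> tr _; rewrite (le_trans tr ru) (le_trans hst tr).
Qed.
Lemma I_nd k s t (hst : val s <= val t) (r : Rp R) n :
  dS k s t r n -> dD k s r n.+1 -> dS k s t r n.+1 = dD k s r n.
Proof.
move=> h1 h2; case/orP: (@dS_deg _ _ _ _ _ h1) => /eqP nk; subst k;
  move: h1 h2; dnorm; last by [].
by move=> _ /andP[_ /eqP]; lia.
Qed.
Definition Imap k s t (hst : val s <= val t) : phom (Sobj k s t hst) (Dobj k s) :=
  dimHom (@I_nt k s t hst) (@I_nd k s t hst).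

Lemma Ii_nt k s (r u : Rp R) n : val r <= val u ->
  dSi k s r n -> dD k s u n -> dSi k s u n = dD k s r n.
Proof.
move=> ru h1 h2; move/eqP: (@dSi_deg _ _ _ _ h1) => nk; subst k.
move: h1 h2; dnorm => sr /andP[su n0]; by rewrite su sr n0.
Qed.
Lemma Ii_nd k s (r : Rp R) n :
  dSi k s r n -> dD k s r n.+1 -> dSi k s r n.+1 = dD k s r n.
Proof.
move=> h1 h2; move/eqP: (@dSi_deg _ _ _ _ h1) => nk; subst k.
move: h2; rewrite /dD => /andP[_ /orP[/andP[/eqP ? _]|/eqP ?]]; lia.
Qed.
Definition Iimap k s : phom (Siobj k s) (Dobj k s) :=
  dimHom (@Ii_nt k s) (@Ii_nd k s).

Lemma J_nt k s t (hst : val s <= val t) (r u : Rp R) n : val r <= val u ->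
  dD k t r n -> dD k s u n -> dD k t u n = dD k s r n.
Proof.
rewrite /dD => ru /andP[tr ->] /andP[_ _].
by rewrite (le_trans tr ru) (le_trans hst tr).
Qed.
Lemma J_nd k s t (hst : val s <= val t) (r : Rp R) n :
  dD k t r n -> dD k s r n.+1 -> dD k t r n.+1 = dD k s r n.
Proof.
rewrite /dD => /andP[tr a] /andP[_ b].
by rewrite tr a b (le_trans hst tr).
Qed.
Definition Jmap k s t (hst : val s <= val t) : phom (Dobj k t) (Dobj k s) :=
  dimHom (@J_nt k s t hst) (@J_nd k s t hst).

Lemma Z_nt k s (r u : Rp R) n : val r <= val u ->
  dZ r n -> dD k s u n -> dZ u n = dD k s r n.
Proof. by []. Qed.
Lemma Z_nd k s (r : Rp R) n : dZ r n -> dD k s r n.+1 -> dZ r n.+1 = dD k s r n.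
Proof. by []. Qed.
Definition Zmap k s : phom Zobj (Dobj k s) := dimHom (@Z_nt k s) (@Z_nd k s).

Inductive Igen : mclass R :=
| Igen_fin (k : nat) (s t : Rp R) (hst : val s < val t) :
    Igen _ _ (Imap k s t (ltW hst))
| Igen_inf (k : nat) (s : Rp R) : Igen _ _ (Iimap k s).

Inductive Jgen : mclass R :=
| Jgen_DD (k : nat) (s t : Rp R) (hst : val s < val t) :
    Jgen _ _ (Jmap k s t (ltW hst))
| Jgen_0D (k : nat) (s : Rp R) : Jgen _ _ (Zmap k s).

End Gens.
Arguments Igen {R}.
Arguments Jgen {R}.

(* Every map with the RLP against I has it against J, hence Cof(J) ⊆ Cof(I).
   A map out of D^{k+1}_s is an element of degree k at stage s, so lifting
   against D^{k+1}_t -> D^{k+1}_s means extending an element x from t down to s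
   over a given y. Two lifts against I do this: against
   S^{k+2}_[s,t) -> D^{k+2}_s the cocycle dx extends to a cocycle c over dy, and
   against S^{k+1}_[s,t) -> D^{k+1}_s then x extends with coboundary c. The maps
   0 -> D^{k+1}_s are handled the same way with the spheres S_[s,oo).

   For the weak equivalence fix a stage r and let R_r be the right adjoint of
   evaluation at r. At stage r, i factors through A ⊕ Cone(id_B) as a
   quasi-isomorphism followed by a surjection g. Lifting against J only asks
   for pointwise surjections and for lifts along restrictions, which R_r g
   inherits from g. So i lifts against R_r g, giving a chain map
   H : B(r) -> A(r) ⊕ Cone(id_B(r)) with H i = incl and g H = id, and H^*(i) is
   bijective. *)

From HB Require Import structures.
From mathcomp Require Import all_boot all_order all_algebra.
From mathcomp Require Import reals.
Import Order.TTheory GRing.Theory Num.Theory.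
Local Open Scope ring_scope.

Arguments pdd {R} p r n x : rename.
Arguments ptr_id {R} p {r} n h x : rename.
Arguments ptr_comp {R} p {r s t} n h1 h2 h3 x.
Arguments ptr_d {R} p {r s} n h x.
Arguments phf_d {R X Y} p r n x.
Arguments phf_tr {R X Y} p {r s} n h x.

HB.instance Definition _ (R : realType) (X : pcc R) r n :=
  GRing.isLinear.Build rat (pV X r n) (pV X r n.+1) *:%R (pd X r n) (@pd_lin R X r n).
HB.instance Definition _ (R : realType) (X : pcc R) (r s : Rp R) n h :=
  GRing.isLinear.Build rat (pV X r n) (pV X s n) *:%R (ptr X n h) (@ptr_lin R X r s n h).
HB.instance Definition _ (R : realType) (X Y : pcc R) (f : phom X Y) r n :=
  GRing.isLinear.Build rat (pV X r n) (pV Y r n) *:%R (@phf R X Y f r n)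
    (@phf_lin R X Y f r n).

Lemma ord_bool_eq {b : bool} (i j : 'I_b) : i = j.
Proof. by case: b i j => i j; [rewrite (ord1 i) (ord1 j) | case: i]. Qed.

Lemma big_ord_bool (V : zmodType) (b : bool) (F : 'I_b -> V) (i0 : 'I_b) :
  \sum_i F i = F i0.
Proof. by case: b F i0 => F i0; [rewrite big_ord1 (ord1 i0) | case: i0]. Qed.
Arguments big_ord_bool {V b F} i0.

Lemma ord_boolP {b : bool} : 'I_b -> b.
Proof. by case: b => // -[]. Qed.

Definition ord_of_bool (b : bool) : b -> 'I_b :=
  if b is true then fun=> ord0 else fun H => False_rect _ (notF H).
Arguments ord_of_bool {b}.

Definition entry {b : bool} (z : 'rV[rat]_b) : rat := \sum_j z 0 j.

Lemma entryP (b : bool) a (z w : 'rV[rat]_b) : entry (a *: z + w) = a * entry z + entry w.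
Proof. by rewrite /entry mulr_sumr -big_split; apply: eq_bigr => j _; rewrite !mxE. Qed.

Lemma entry0 (b : bool) (z : 'rV[rat]_b) : ~~ b -> entry z = 0.
Proof. by case: b z => // z _; rewrite /entry big_ord0. Qed.

Lemma entry_const1 (b : bool) : b -> entry (const_mx 1 : 'rV[rat]_b) = 1.
Proof. by case: b => // _; rewrite /entry big_ord1 mxE. Qed.

Lemma rv_entry (b : bool) (z : 'rV[rat]_b) : z = entry z *: const_mx 1.
Proof.
case: b z => z; apply/matrixP => i j; last by case: j.
by rewrite !mxE (ord1 i) (ord1 j) /entry big_ord1 mulr1.
Qed.

Lemma entry_mx1 (a b : bool) (z : 'rV[rat]_a) :
  entry (z *m mx1 a b) = (b : nat)%:R * entry z.
Proof.
case: a z; case: b => z /=.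
- by rewrite (mx1_id true) mul1r.
- by rewrite /entry big_ord0 mul0r.
- rewrite [z]thinmx0 mul0mx /entry big_ord0 mulr0.
  by apply: big1 => j _; rewrite mxE.
- by rewrite /entry !big_ord0 mulr0.
Qed.

Lemma const1_mx1 (a b : bool) : a -> b ->
  (const_mx 1 : 'rV[rat]_a) *m mx1 a b = const_mx 1.
Proof. by case: a; case: b => // _ _; rewrite (mx1_id true). Qed.

Section Persistence.
Variable R : realType.
Implicit Types (X Y : pcc R) (r s t : Rp R).

Definition pcomp {X Y Z : pcc R} (g : phom Y Z) (f : phom X Y) : phom X Z.
refine (@PHom R X Z (fun r n x => phf g (phf f x)) _ _ _).
- by move=> r n a x y; rewrite !linearP.
- by move=> r n x; rewrite !phf_d.
- by move=> r s n h x; rewrite !phf_tr.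
Defined.

Lemma pcompE {X Y Z} (g : phom Y Z) (f : phom X Y) r n (x : pV X r n) :
  phf (pcomp g f) x = phf g (phf f x).
Proof. by []. Qed.

(* Junk value: [ptr_to r x] is 0 when [r] lies below the stage of [x]. *)
Definition ptr_to {X s} (r : Rp R) {n} (x : pV X s n) : pV X r n :=
  match Sumbool.sumbool_of_bool (val s <= val r) with
  | left h => ptr X n h x | right _ => 0 end.

Lemma ptr_toE {X s r n} (x : pV X s n) (h : val s <= val r) : ptr_to r x = ptr X n h x.
Proof.
rewrite /ptr_to; case: Sumbool.sumbool_of_bool => [h'|H]; last by exfalso; move: h; rewrite H.
by rewrite (bool_irrelevance h' h).
Qed.

Lemma ptr_to_out {X s r n} (x : pV X s n) : ~~ (val s <= val r) -> ptr_to r x = 0.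
Proof. by rewrite /ptr_to; case: Sumbool.sumbool_of_bool => [h|//]; rewrite h. Qed.

Lemma ptr_to_lin X s r n : linear (@ptr_to X s r n).
Proof.
move=> a x y; have [h|h] := boolP (val s <= val r).
  by rewrite !(ptr_toE _ h) linearP.
by rewrite !ptr_to_out // scaler0 addr0.
Qed.

HB.instance Definition _ X s r n :=
  GRing.isLinear.Build rat (pV X s n) (pV X r n) *:%R (@ptr_to X s r n)
    (ptr_to_lin X s r n).

Lemma phf_ptr_to {X Y} (f : phom X Y) s r n (x : pV X s n) :
  phf f (ptr_to r x) = ptr_to r (phf f x).
Proof.
have [h|h] := boolP (val s <= val r); last by rewrite !ptr_to_out // raddf0.
by rewrite !(ptr_toE _ h) phf_tr.
Qed.

Definition at_deg {X r m} (x : pV X r m) n : pV X r n :=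
  match m =P n with ReflectT H => eq_rect m (pV X r) x n H | ReflectF _ => 0 end.

Lemma at_degE {X r m} (x : pV X r m) : at_deg x m = x.
Proof. by rewrite /at_deg; case: eqP => // H; rewrite (eq_axiomK H). Qed.

Lemma at_degN {X r m} (x : pV X r m) n : m != n -> at_deg x n = 0.
Proof. by rewrite /at_deg; case: eqP. Qed.

Section DimensionComplex.
Variables (dm : Rp R -> nat -> bool)
  (hc : forall r s t n, val r <= val s -> val s <= val t -> dm r n -> dm t n -> dm s n)
  (hd : forall r n, ~~ [&& dm r n, dm r n.+1 & dm r n.+2])
  (ht : forall r s n, val r <= val s -> dm r n -> dm s n.+1 -> dm r n.+1 = dm s n).
Local Notation E := (dimObj hc hd ht).

Lemma phf_entry X (f : phom E X) r n (z : pV E r n) :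
  phf f z = entry z *: phf f (const_mx 1 : 'rV[rat]_(dm r n)).
Proof. by rewrite {1}(@rv_entry (dm r n) z) linearZZ. Qed.

Lemma phf_dim0 X (f : phom E X) r n (z : pV E r n) : ~~ dm r n -> phf f z = 0.
Proof. by move=> H; rewrite phf_entry entry0 // scale0r. Qed.

Section FromGenerators.
Variables (X : pcc R) (e : forall r n, pV X r n).
Hypothesis e_d : forall r n, dm r n -> pd X r n (e r n) = (dm r n.+1 : nat)%:R *: e r n.+1.
Hypothesis e_tr : forall r s n (h : val r <= val s), dm r n ->
  ptr X n h (e r n) = (dm s n : nat)%:R *: e s n.

Definition dim_hom : phom E X.
refine (@PHom R E X (fun r n (z : 'rV[rat]_(dm r n)) => entry z *: e r n) _ _ _).
- by move=> r n a z w /=; rewrite entryP scalerDl scalerA.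
- move=> r n z /=; rewrite entry_mx1.
  have /orP[H|H] := orbN (dm r n); first by rewrite linearZZ /= e_d // scalerA mulrC.
  by rewrite entry0 // mulr0 !scale0r raddf0.
- move=> r s n h z /=; rewrite entry_mx1.
  have /orP[H|H] := orbN (dm r n); first by rewrite linearZZ /= e_tr // scalerA mulrC.
  by rewrite entry0 // mulr0 !scale0r raddf0.
Defined.

Lemma dim_homE r n (z : pV E r n) : phf dim_hom z = entry z *: e r n.
Proof. by []. Qed.
End FromGenerators.
End DimensionComplex.
Arguments phf_entry {dm hc hd ht X} f {r n} z.
Arguments phf_dim0 {dm hc hd ht X} f {r n} z.
Arguments dim_hom {dm hc hd ht X e}.

Lemma llp_dim0 dA hA1 hA2 hA3 dB hB1 hB2 hB3 X Y
    (i : phom (@dimObj R dA hA1 hA2 hA3) (@dimObj R dB hB1 hB2 hB3)) (p : phom X Y) :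
  (forall r n, ~~ dA r n) -> (forall r n, ~~ dB r n) -> llp i p.
Proof.
move=> A0 B0 u v _.
have e_d r n : dB r n -> pd X r n 0 = (dB r n.+1 : nat)%:R *: (0 : pV X r n.+1).
  by rewrite raddf0 scaler0.
have e_tr r s n (h : val r <= val s) :
    dB r n -> ptr X n h 0 = (dB s n : nat)%:R *: (0 : pV X s n).
  by rewrite raddf0 scaler0.
exists (dim_hom e_d e_tr); split=> r n a; rewrite dim_homE scaler0.
  by rewrite (phf_dim0 u).
by rewrite raddf0 (phf_dim0 v).
Qed.

Lemma dD_m m s r : dD R m.+1 s r m = (val s <= val r).
Proof. by rewrite /dD eqxx orbT andbT. Qed.

Lemma dD_Sm m s r : dD R m.+1 s r m.+1 = (val s <= val r).
Proof. by rewrite /dD eqxx andbT. Qed.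

Lemma dD_SSm m s r : dD R m.+1 s r m.+2 = false.
Proof. by rewrite /dD !eqSS !gtn_eqF // andbF. Qed.

Lemma dDP {m s r n} : dD R m.+1 s r n -> val s <= val r /\ (n = m.+1 \/ n = m).
Proof.
by rewrite /dD => /andP[sr /orP[/andP[/eqP -> _]|/eqP[->]]]; split=> //; [left|right].
Qed.

Lemma dD0 s r n : dD R 0 s r n = false.
Proof. by rewrite /dD andbF /= andbF. Qed.

Lemma dS_Sm m s t r : dS R m.+1 s t r m.+1 = (val s <= val r).
Proof. by rewrite /dS eqxx /= orbT andbT eqSS gtn_eqF // orbF. Qed.

Lemma dS_m m s t r : dS R m.+1 s t r m = (val t <= val r).
Proof. by rewrite /dS eqxx ltn_eqF. Qed.

Lemma dSP {m s t r n} : dS R m.+1 s t r n ->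
  (n = m.+1 /\ val s <= val r) \/ (n = m /\ val t <= val r).
Proof.
by rewrite /dS => /orP[/andP[/andP[/eqP -> ->] _]|/andP[/eqP[->] ->]]; [left|right].
Qed.

Lemma dSi_m m s r : dSi R m s r m = (val s <= val r).
Proof. by rewrite /dSi eqxx. Qed.

Lemma dSiP {m s r n} : dSi R m s r n -> n = m /\ val s <= val r.
Proof. by rewrite /dSi => /andP[/eqP]. Qed.

Section DiskHom.
Variables (X : pcc R) (s : Rp R) (m : nat) (x : pV X s m).
Let e r n : pV X r n := ptr_to r (at_deg x n + at_deg (pd X s m x) n).

Let e_d r n : dD R m.+1 s r n -> pd X r n (e r n) = (dD R m.+1 s r n.+1 : nat)%:R *: e r n.+1.
Proof.
move=> /dDP[sr [->|->]]; rewrite /e.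
  rewrite dD_SSm scale0r at_degN ?ltn_eqF // at_degE add0r (ptr_toE _ sr) ptr_d pdd.
  exact: raddf0.
rewrite dD_Sm sr scale1r at_degE (at_degN x) ?ltn_eqF // at_degN ?gtn_eqF // at_degE.
by rewrite addr0 add0r !(ptr_toE _ sr) ptr_d.
Qed.

Let e_tr r r' n (h : val r <= val r') : dD R m.+1 s r n ->
  ptr X n h (e r n) = (dD R m.+1 s r' n : nat)%:R *: e r' n.
Proof.
move=> H; have [sr _] := dDP H; have sr' := le_trans sr h.
have -> : dD R m.+1 s r' n by move: H; rewrite /dD sr sr'.
by rewrite scale1r /e (ptr_toE _ sr) (ptr_toE _ sr') ptr_comp.
Qed.

Definition Dhom : phom (Dobj R m.+1 s) X := dim_hom e_d e_tr.

Lemma Dhom_gen : phf Dhom (const_mx 1 : 'rV[rat]_(dD R m.+1 s s m)) = x.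
Proof.
rewrite dim_homE entry_const1 ?dD_m // scale1r /e at_degE at_degN ?gtn_eqF //.
by rewrite addr0 (ptr_toE _ (lexx _)) ptr_id.
Qed.
End DiskHom.
Arguments Dhom {X s m} x.
Arguments Dhom_gen {X s m x}.

Lemma Dobj_gen_ptr {m s r} (h : val s <= val r) :
  (const_mx 1 : 'rV[rat]_(dD R m.+1 s r m)) = ptr (Dobj R m.+1 s) m h (const_mx 1).
Proof. by rewrite /= const1_mx1 // dD_m. Qed.

Lemma Dobj_gen_pd {m s r} (h : val s <= val r) :
  (const_mx 1 : 'rV[rat]_(dD R m.+1 s r m.+1)) = pd (Dobj R m.+1 s) r m (const_mx 1).
Proof. by rewrite /= const1_mx1 // ?dD_m ?dD_Sm. Qed.

Lemma Dobj_phf_eq m s X (f g : phom (Dobj R m.+1 s) X) :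
  phf f (const_mx 1 : 'rV[rat]_(dD R m.+1 s s m)) = phf g (const_mx 1) ->
  forall r n z, @phf _ _ _ f r n z = phf g z.
Proof.
move=> fg r n z; rewrite (phf_entry f) (phf_entry g).
have /orP[/dDP[sr [En|En]]|H] := orbN (dD R m.+1 s r n); last by rewrite entry0 ?scale0r.
  by subst n; rewrite (Dobj_gen_pd sr) !phf_d (Dobj_gen_ptr sr) !phf_tr fg.
by subst n; rewrite (Dobj_gen_ptr sr) !phf_tr fg.
Qed.

Section SphereHom.
Variables (X : pcc R) (s t : Rp R) (hst : val s <= val t) (m : nat).
Variables (c : pV X s m.+1) (w : pV X t m).
Hypotheses (c_d : pd X s m.+1 c = 0) (w_d : pd X t m w = ptr X m.+1 hst c).
Let e r n : pV X r n := ptr_to r (at_deg c n) + ptr_to r (at_deg w n).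

Let e_Sm {r} (sr : val s <= val r) : e r m.+1 = ptr X m.+1 sr c.
Proof. by rewrite /e at_degE at_degN ?ltn_eqF // raddf0 addr0 (ptr_toE _ sr). Qed.

Let e_m {r} (tr : val t <= val r) : e r m = ptr X m tr w.
Proof. by rewrite /e at_degE at_degN ?gtn_eqF // raddf0 add0r (ptr_toE _ tr). Qed.

Let e_d r n : dS R m.+1 s t r n ->
  pd X r n (e r n) = (dS R m.+1 s t r n.+1 : nat)%:R *: e r n.+1.
Proof.
move=> /dSP[[-> sr]|[-> tr]].
  have -> : dS R m.+1 s t r m.+2 = false by rewrite /dS !eqSS !gtn_eqF.
  by rewrite scale0r (e_Sm sr) ptr_d c_d raddf0.
have sr := le_trans hst tr.
by rewrite dS_Sm sr scale1r (e_m tr) (e_Sm sr) ptr_d w_d ptr_comp.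
Qed.

Let e_tr r r' n (h : val r <= val r') : dS R m.+1 s t r n ->
  ptr X n h (e r n) = (dS R m.+1 s t r' n : nat)%:R *: e r' n.
Proof.
move=> /dSP[[-> sr]|[-> tr]].
  have sr' := le_trans sr h.
  by rewrite dS_Sm sr' scale1r (e_Sm sr) (e_Sm sr') ptr_comp.
have tr' := le_trans tr h.
by rewrite dS_m tr' scale1r (e_m tr) (e_m tr') ptr_comp.
Qed.

Definition Shom : phom (Sobj R m.+1 s t hst) X := dim_hom e_d e_tr.

Lemma Shom_gen_Sm : phf Shom (const_mx 1 : 'rV[rat]_(dS R m.+1 s t s m.+1)) = c.
Proof. by rewrite dim_homE entry_const1 ?dS_Sm // scale1r (e_Sm (lexx _)) ptr_id. Qed.

Lemma Shom_gen_m : phf Shom (const_mx 1 : 'rV[rat]_(dS R m.+1 s t t m)) = w.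
Proof. by rewrite dim_homE entry_const1 ?dS_m // scale1r (e_m (lexx _)) ptr_id. Qed.
End SphereHom.
Arguments Shom {X s t hst m c w} c_d w_d.
Arguments Shom_gen_Sm {X s t hst m c w c_d w_d}.
Arguments Shom_gen_m {X s t hst m c w c_d w_d}.

Lemma Sobj_phf_eq m s t (hst : val s <= val t) X (f g : phom (Sobj R m.+1 s t hst) X) :
  phf f (const_mx 1 : 'rV[rat]_(dS R m.+1 s t s m.+1)) = phf g (const_mx 1) ->
  phf f (const_mx 1 : 'rV[rat]_(dS R m.+1 s t t m)) = phf g (const_mx 1) ->
  forall r n z, @phf _ _ _ f r n z = phf g z.
Proof.
move=> fgs fgt r n z; rewrite (phf_entry f) (phf_entry g).
have /orP[/dSP[[En sr]|[En tr]]|H] := orbN (dS R m.+1 s t r n);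
  last by rewrite entry0 ?scale0r.
  subst n; have -> : (const_mx 1 : 'rV[rat]_(dS R m.+1 s t r m.+1)) =
      ptr (Sobj R m.+1 s t hst) m.+1 sr (const_mx 1).
    by rewrite /= const1_mx1 // dS_Sm.
  by rewrite !phf_tr fgs.
subst n; have -> : (const_mx 1 : 'rV[rat]_(dS R m.+1 s t r m)) =
    ptr (Sobj R m.+1 s t hst) m tr (const_mx 1).
  by rewrite /= const1_mx1 // dS_m.
by rewrite !phf_tr fgt.
Qed.

Section HalfLineHom.
Variables (X : pcc R) (s : Rp R) (m : nat) (c : pV X s m).
Hypothesis c_d : pd X s m c = 0.
Let e r n : pV X r n := ptr_to r (at_deg c n).

Let e_d r n : dSi R m s r n -> pd X r n (e r n) = (dSi R m s r n.+1 : nat)%:R *: e r n.+1.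
Proof.
move=> /dSiP[-> sr]; have -> : dSi R m s r m.+1 = false by rewrite /dSi gtn_eqF.
by rewrite scale0r /e at_degE (ptr_toE _ sr) ptr_d c_d raddf0.
Qed.

Let e_tr r r' n (h : val r <= val r') : dSi R m s r n ->
  ptr X n h (e r n) = (dSi R m s r' n : nat)%:R *: e r' n.
Proof.
move=> /dSiP[-> sr]; have sr' := le_trans sr h.
by rewrite dSi_m sr' scale1r /e at_degE (ptr_toE _ sr) (ptr_toE _ sr') ptr_comp.
Qed.

Definition Sihom : phom (Siobj R m s) X := dim_hom e_d e_tr.

Lemma Sihom_gen : phf Sihom (const_mx 1 : 'rV[rat]_(dSi R m s s m)) = c.
Proof.
by rewrite dim_homE entry_const1 ?dSi_m // scale1r /e at_degE (ptr_toE _ (lexx _)) ptr_id.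
Qed.
End HalfLineHom.
Arguments Sihom {X s m c} c_d.
Arguments Sihom_gen {X s m c c_d}.

Lemma Siobj_phf_eq m s X (f g : phom (Siobj R m s) X) :
  phf f (const_mx 1 : 'rV[rat]_(dSi R m s s m)) = phf g (const_mx 1) ->
  forall r n z, @phf _ _ _ f r n z = phf g z.
Proof.
move=> fg r n z; rewrite (phf_entry f) (phf_entry g).
have /orP[/dSiP[En sr]|H] := orbN (dSi R m s r n); last by rewrite entry0 ?scale0r.
subst n.
have -> : (const_mx 1 : 'rV[rat]_(dSi R m s r m)) = ptr (Siobj R m s) m sr (const_mx 1).
  by rewrite /= const1_mx1 // dSi_m.
by rewrite !phf_tr fg.
Qed.

Definition pw_surjective {X Y} (p : phom X Y) :=
  forall s m (y : pV Y s m), exists x, phf p x = y.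

Definition restriction_lifting {X Y} (p : phom X Y) :=
  forall m s t (hst : val s < val t) (x : pV X t m) (y : pV Y s m),
    phf p x = ptr Y m (ltW hst) y ->
    exists x', ptr X m (ltW hst) x' = x /\ phf p x' = y.

Lemma llp_Jmap_of_lifting X Y (p : phom X Y) m s t (hst : val s < val t) :
  restriction_lifting p -> llp (Jmap R m.+1 s t (ltW hst)) p.
Proof.
move=> lift u v uv.
have J_gen : phf (Jmap R m.+1 s t (ltW hst)) (const_mx 1 : 'rV[rat]_(dD R m.+1 t t m)) =
    const_mx 1 by rewrite /= const1_mx1 // dD_m ?lexx ?(ltW hst).
have /lift[x' [tx' px']] : phf p (phf u (const_mx 1 : 'rV[rat]_(dD R m.+1 t t m))) =
    ptr Y m (ltW hst) (phf v (const_mx 1 : 'rV[rat]_(dD R m.+1 s s m))).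
  by rewrite uv J_gen (Dobj_gen_ptr (ltW hst)) phf_tr.
exists (Dhom x'); split=> [r n a | r n b].
  apply: (@Dobj_phf_eq m t X (pcomp (Dhom x') (Jmap R m.+1 s t (ltW hst))) u).
  by rewrite pcompE J_gen (Dobj_gen_ptr (ltW hst)) phf_tr Dhom_gen.
apply: (@Dobj_phf_eq m s Y (pcomp p (Dhom x')) v).
by rewrite pcompE Dhom_gen.
Qed.

Lemma llp_Zmap_of_surjective X Y (p : phom X Y) m s :
  pw_surjective p -> llp (Zmap R m.+1 s) p.
Proof.
move=> surj u v _.
have [x px] := surj s m (phf v (const_mx 1 : 'rV[rat]_(dD R m.+1 s s m))).
exists (Dhom x); split=> [r n a | r n b].
  by rewrite (phf_dim0 (Zmap R m.+1 s)) // raddf0 (phf_dim0 u).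
apply: (@Dobj_phf_eq m s Y (pcomp p (Dhom x)) v).
by rewrite pcompE Dhom_gen.
Qed.

Lemma RLP_Jgen_of_lifting X Y (p : phom X Y) :
  pw_surjective p -> restriction_lifting p -> RLP Jgen p.
Proof.
move=> surj lift A B j [k s t hst|k s]; case: k => [|m].
- by apply: llp_dim0 => r n; rewrite dD0.
- exact: llp_Jmap_of_lifting.
- by apply: llp_dim0 => r n; rewrite ?dD0.
- exact: llp_Zmap_of_surjective.
Qed.

Lemma Imap_lift {X Y} {p : phom X Y} {m s t} {hst : val s <= val t} :
  llp (Imap R m.+1 s t hst) p ->
  forall (c : pV X s m.+1) (w : pV X t m) (b : pV Y s m),
    pd X s m.+1 c = 0 -> pd X t m w = ptr X m.+1 hst c ->
    phf p c = pd Y s m b -> phf p w = ptr Y m hst b ->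
  exists x, [/\ pd X s m x = c, ptr X m hst x = w & phf p x = b].
Proof.
move=> Hllp c w b c_d w_d pc pw.
have I_gen_Sm : phf (Imap R m.+1 s t hst) (const_mx 1 : 'rV[rat]_(dS R m.+1 s t s m.+1)) =
    const_mx 1 by rewrite /= const1_mx1 ?dS_Sm ?dD_Sm.
have I_gen_m : phf (Imap R m.+1 s t hst) (const_mx 1 : 'rV[rat]_(dS R m.+1 s t t m)) =
    const_mx 1 by rewrite /= const1_mx1 ?dS_m ?dD_m.
have comm r n a : phf p (phf (Shom c_d w_d) a) =
    phf (Dhom b) (@phf _ _ _ (Imap R m.+1 s t hst) r n a).
  apply: (@Sobj_phf_eq m s t hst Y (pcomp p (Shom c_d w_d))
                       (pcomp (Dhom b) (Imap R m.+1 s t hst))).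
    by rewrite !pcompE Shom_gen_Sm I_gen_Sm (Dobj_gen_pd (lexx (val s))) phf_d Dhom_gen.
  by rewrite !pcompE Shom_gen_m I_gen_m (Dobj_gen_ptr hst) phf_tr Dhom_gen.
have [h [hI ph]] := Hllp _ _ comm.
exists (phf h (const_mx 1 : 'rV[rat]_(dD R m.+1 s s m))); split.
- by rewrite -phf_d -(Dobj_gen_pd (lexx (val s))) -I_gen_Sm hI Shom_gen_Sm.
- by rewrite -phf_tr -(Dobj_gen_ptr hst) -I_gen_m hI Shom_gen_m.
- by rewrite ph Dhom_gen.
Qed.

Lemma Iimap_lift {X Y} {p : phom X Y} {m s} :
  llp (Iimap R m.+1 s) p ->
  forall (c : pV X s m.+1) (b : pV Y s m), pd X s m.+1 c = 0 -> phf p c = pd Y s m b ->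
  exists x, pd X s m x = c /\ phf p x = b.
Proof.
move=> Hllp c b c_d pc.
have I_gen : phf (Iimap R m.+1 s) (const_mx 1 : 'rV[rat]_(dSi R m.+1 s s m.+1)) =
    const_mx 1 by rewrite /= const1_mx1 ?dSi_m ?dD_Sm.
have comm r n a : phf p (phf (Sihom c_d) a) = phf (Dhom b) (@phf _ _ _ (Iimap R m.+1 s) r n a).
  apply: (@Siobj_phf_eq m.+1 s Y (pcomp p (Sihom c_d)) (pcomp (Dhom b) (Iimap R m.+1 s))).
  by rewrite !pcompE Sihom_gen I_gen (Dobj_gen_pd (lexx (val s))) phf_d Dhom_gen.
have [h [hI ph]] := Hllp _ _ comm.
exists (phf h (const_mx 1 : 'rV[rat]_(dD R m.+1 s s m))); split.
  by rewrite -phf_d -(Dobj_gen_pd (lexx (val s))) -I_gen hI Sihom_gen.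
by rewrite ph Dhom_gen.
Qed.

Lemma RLP_Igen_surjective X Y (p : phom X Y) : RLP Igen p -> pw_surjective p.
Proof.
move=> HI s m y.
have [c [c_d pc]] : exists c, pd X s m.+1 c = 0 /\ phf p c = pd Y s m y.
  by apply: (Iimap_lift (HI _ _ _ (Igen_inf R m.+2 s)) 0 (pd Y s m y)); rewrite ?raddf0 ?pdd.
by have [x [_ px]] := Iimap_lift (HI _ _ _ (Igen_inf R m.+1 s)) _ _ c_d pc; exists x.
Qed.

Lemma RLP_Igen_restriction_lifting X Y (p : phom X Y) :
  RLP Igen p -> restriction_lifting p.
Proof.
move=> HI m s t hst x y pxy.
have [c [c_d tc pc]] : exists c, [/\ pd X s m.+1 c = 0,
    ptr X m.+1 (ltW hst) c = pd X t m x & phf p c = pd Y s m y].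
  apply: (Imap_lift (HI _ _ _ (Igen_fin R m.+2 s t hst))); rewrite ?raddf0 ?pdd //.
  by rewrite phf_d pxy ptr_d.
have [x' [_ tx' px']] :=
  Imap_lift (HI _ _ _ (Igen_fin R m.+1 s t hst)) _ _ _ c_d (esym tc) pc pxy.
by exists x'.
Qed.

Lemma RLP_Igen_Jgen X Y (p : phom X Y) : RLP Igen p -> RLP Jgen p.
Proof.
move=> HI; apply: RLP_Jgen_of_lifting.
  exact: RLP_Igen_surjective.
exact: RLP_Igen_restriction_lifting.
Qed.

Let idx {r0 s s' : Rp R} (h : val s <= val s') (j : 'I_(val s' <= val r0)%R) :
  'I_(val s <= val r0)%R := ord_of_bool (le_trans h (ord_boolP j)).

Section Cofree.
Variables (r0 : Rp R) (C : nat -> lmodType rat) (dC : forall n, C n -> C n.+1).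
Hypotheses (dC_lin : forall n, linear (dC n)) (dCC : forall n x, dC n.+1 (dC n x) = 0).

(* The right adjoint of evaluation at [r0]: [C] at the stages [s <= r0] and 0
   above, encoded as functions on ['I_(s <= r0)]. *)
Definition cofreeV s n : lmodType rat := {ffun 'I_(val s <= val r0)%R -> C n}.

Definition cofree : pcc R.
refine (@PCC R cofreeV (fun s n f => [ffun j => dC n (f j)]) _ _
  (fun s s' n h f => [ffun _ => \sum_i f i]) _ _ _ _).
- by move=> s n a f g; apply/ffunP => j; rewrite !ffunE dC_lin.
- by move=> s n f; apply/ffunP => j; rewrite !ffunE dCC.
- move=> s s' n h a f g; apply/ffunP => j.
  by rewrite !ffunE !(big_ord_bool (idx h j)) !ffunE.
- by move=> s n h f; apply/ffunP => j; rewrite ffunE (big_ord_bool j).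
- move=> s s' s'' n h1 h2 h3 f; apply/ffunP => j.
  by rewrite !ffunE (big_ord_bool (idx h2 j)) ffunE.
- move=> s s' n h f; apply/ffunP => j.
  by rewrite !ffunE !(big_ord_bool (idx h j)) ffunE.
Defined.

Lemma cofree_pdE s n (f : pV cofree s n) j : pd cofree s n f j = dC n (f j).
Proof. by rewrite /= ffunE. Qed.

Lemma cofree_ptrE s s' n (h : val s <= val s') (f : pV cofree s n) j :
  ptr cofree n h f j = \sum_i f i.
Proof. by rewrite /= ffunE. Qed.

Section Transpose.
Variables (Z : pcc R) (phi : forall n, pV Z r0 n -> C n).
Hypotheses (phi_lin : forall n, linear (phi n))
  (phi_d : forall n z, phi n.+1 (pd Z r0 n z) = dC n (phi n z)).

Definition cofree_lift : phom Z cofree.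
refine (@PHom R Z cofree (fun s n z => [ffun _ => phi n (ptr_to r0 z)]) _ _ _).
- by move=> s n a z w; apply/ffunP => j; rewrite !ffunE linearP phi_lin.
- move=> s n z; apply/ffunP => j; rewrite !ffunE.
  by rewrite !(ptr_toE _ (ord_boolP j)) -ptr_d phi_d.
- move=> s s' n h z; apply/ffunP => j; rewrite !ffunE (big_ord_bool (idx h j)) ffunE.
  have sr := le_trans h (ord_boolP j).
  by rewrite (ptr_toE _ (ord_boolP j)) (ptr_toE _ sr) (ptr_comp Z n h _ sr).
Defined.

Lemma cofree_liftE s n (z : pV Z s n) j : phf cofree_lift z j = phi n (ptr_to r0 z).
Proof. by rewrite /= ffunE. Qed.
End Transpose.

End Cofree.
Arguments cofree r0 {C dC} dC_lin dCC.
Arguments cofree_lift r0 {C dC} dC_lin dCC {Z phi} phi_lin phi_d.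

Section CofreeMap.
Variables (r0 : Rp R) (C : nat -> lmodType rat) (dC : forall n, C n -> C n.+1).
Hypotheses (dC_lin : forall n, linear (dC n)) (dCC : forall n x, dC n.+1 (dC n x) = 0).
Variables (C' : nat -> lmodType rat) (dC' : forall n, C' n -> C' n.+1).
Hypotheses (dC'_lin : forall n, linear (dC' n)) (dCC' : forall n x, dC' n.+1 (dC' n x) = 0).
Variables (g : forall n, C n -> C' n) (g_lin : forall n, linear (g n))
  (g_d : forall n x, g n.+1 (dC n x) = dC' n (g n x)).

Definition cofree_map : phom (cofree r0 dC_lin dCC) (cofree r0 dC'_lin dCC').
refine (@PHom R (cofree r0 dC_lin dCC) (cofree r0 dC'_lin dCC')
  (fun s n f => [ffun j => g n (f j)]) _ _ _).
- by move=> s n a f f'; apply/ffunP => j; rewrite !ffunE g_lin.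
- by move=> s n f; apply/ffunP => j; rewrite !ffunE g_d.
- move=> s s' n h f; apply/ffunP => j; rewrite !ffunE.
  by rewrite !(big_ord_bool (idx h j)) !ffunE.
Defined.

Lemma cofree_mapE s n (f : pV (cofree r0 dC_lin dCC) s n) j : phf cofree_map f j = g n (f j).
Proof. by rewrite /= ffunE. Qed.

Lemma RLP_Jgen_cofree_map : (forall n (y : C' n), exists x, g n x = y) -> RLP Jgen cofree_map.
Proof.
move=> gsurj.
have surj : pw_surjective cofree_map.
  move=> s m y; have /orP[sr|sr] := orbN (val s <= val r0); last first.
    by exists 0; apply/ffunP => j; case: (negP sr (ord_boolP j)).
  have [x0 gx0] := gsurj m (y (ord_of_bool sr)).
  exists [ffun _ => x0]; apply/ffunP => j.
  by rewrite cofree_mapE ffunE gx0 (ord_bool_eq (ord_of_bool sr) j).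
apply: RLP_Jgen_of_lifting => // m s t hst x y pxy.
have /orP[tr|tr] := orbN (val t <= val r0); last first.
  have [x' px'] := surj s m y; exists x'; split=> //.
  by apply/ffunP => j; case: (negP tr (ord_boolP j)).
have jt := ord_of_bool tr.
exists [ffun _ => \sum_i x i]; split; apply/ffunP => j.
  by rewrite cofree_ptrE (big_ord_bool (idx (ltW hst) j)) ffunE (big_ord_bool j).
move/ffunP/(_ jt): pxy.
by rewrite !cofree_mapE cofree_ptrE ffunE (big_ord_bool jt) (big_ord_bool j).
Qed.
End CofreeMap.
Arguments RLP_Jgen_cofree_map {r0 C dC dC_lin dCC C' dC' dC'_lin dCC' g g_lin g_d}.
Arguments cofree_map r0 {C dC} dC_lin dCC {C' dC'} dC'_lin dCC' {g} g_lin g_d.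

Section ConeFactorization.
Variables (A B : pcc R) (i : phom A B) (r : Rp R).

(* [P = A ⊕ Cone(id_B)] at stage [r], through which [i] factors as the
   quasi-isomorphism [a ↦ (a, 0, 0)] followed by the surjection
   [(a, b, c) ↦ i a + b]. *)
Definition P n : lmodType rat := (pV A r n * pV B r n * pV B r n.-1)%type.

Definition dpred n : pV B r n.-1 -> pV B r n :=
  if n is m.+1 then pd B r m else fun=> 0.

Lemma dpred_lin n : linear (dpred n).
Proof. by case: n => [|m] a x y /=; [rewrite scaler0 addr0 | exact: linearP]. Qed.

HB.instance Definition _ n :=
  GRing.isLinear.Build rat (pV B r n.-1) (pV B r n) *:%R (dpred n) (dpred_lin n).

Lemma pd_dpred n c : pd B r n (dpred n c) = 0.
Proof. by case: n c => [|m] c /=; [exact: raddf0 | exact: pdd]. Qed.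

Lemma bd_dpred n c : bd (dpred n c).
Proof. by case: n c => [|m] c; [|exists c]. Qed.

Definition dP {n} (x : P n) : P n.+1 := (pd A r n x.1.1, pd B r n x.1.2, x.1.2 - dpred n x.2).

Lemma dP_lin n : linear (@dP n).
Proof.
move=> a [[x1 x2] x3] [[y1 y2] y3].
rewrite /dP /= [pd A r n _]linearP [pd B r n _]linearP [dpred n _]linearP /=.
by congr (_, _, _); cbn; rewrite scalerBr opprD addrACA.
Qed.

Lemma dPP n x : @dP n.+1 (@dP n x) = 0.
Proof. by case: x => [[a b] c]; rewrite /dP /= !pdd raddfB /= pd_dpred subr0 subrr. Qed.

Definition projP {n} (x : P n) : pV B r n := phf i x.1.1 + x.1.2.

Lemma projP_lin n : linear (@projP n).
Proof.
move=> a [[x1 x2] x3] [[y1 y2] y3]; rewrite /projP /= linearP /=.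
by rewrite scalerDr addrACA.
Qed.

Lemma projP_d n x : projP (dP x) = pd B r n (projP x).
Proof. by case: x => [[a b] c]; rewrite /projP /= raddfD phf_d. Qed.

Lemma projP_surjective n (y : pV B r n) : exists x, projP x = y.
Proof. by exists (0, y, 0); rewrite /projP /= raddf0 add0r. Qed.

Definition inclP {n} (a : pV A r n) : P n := (a, 0, 0).

Lemma inclP_lin n : linear (@inclP n).
Proof. by move=> a x y; rewrite /inclP; congr (_, _, _); rewrite /= ?scaler0 ?addr0. Qed.

Lemma inclP_d n a : inclP (pd A r n a) = dP (inclP a).
Proof. by rewrite /inclP /dP /= !raddf0 addr0. Qed.

Lemma qiso_at_of_section (H : forall n, pV B r n -> P n) :
  (forall n, H n 0 = 0) ->
  (forall n y, H n.+1 (pd B r n y) = dP (H n y)) ->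
  (forall n a, H n (phf i a) = inclP a) ->
  (forall n y, projP (H n y) = y) -> qiso_at i r.
Proof.
move=> H0 H_d H_i H_proj n; split=> [y y_d | x x_d].
  have := H_d n y; rewrite y_d H0; have := H_proj n y.
  case: (H n y) => [[a b] c]; rewrite /projP /dP /= => <- [a_d _ b_c].
  exists a; split=> //.
  have -> : b = dpred n c by apply/eqP; rewrite -subr_eq0 b_c.
  rewrite opprD addrA subrr add0r -raddfN; exact: bd_dpred.
case: n x x_d => [|n] x _ /=.
  by move=> ix0; have := H_i 0 x; rewrite ix0 H0 => -[].
by move=> [z dz]; have := H_i n.+1 x; rewrite -dz H_d => -[<- _ _]; exists (H n z).1.1.
Qed.

Lemma qiso_at_of_Cof_Jgen : Cof Jgen i -> qiso_at i r.
Proof.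
move=> cofi.
pose p := cofree_map r dP_lin dPP (@pd_lin R B r) (pdd B r) projP_lin projP_d.
pose u := cofree_lift r dP_lin dPP inclP_lin inclP_d.
pose v := cofree_lift r (@pd_lin R B r) (pdd B r) (Z := B) (phi := fun n y => y)
  (fun n _ _ _ => erefl) (fun n y => erefl).
have comm s n a : phf p (phf u a) = phf v (@phf _ _ _ i s n a).
  by apply/ffunP => j; rewrite cofree_mapE !cofree_liftE -phf_ptr_to /projP /= addr0.
have [h [hi hp]] := cofi _ _ p (RLP_Jgen_cofree_map projP_surjective) u v comm.
pose j0 := ord_of_bool (lexx (val r)).
apply: (@qiso_at_of_section (fun n y => @phf _ _ _ h r n y j0)) => [n | n y | n a | n y].
- by rewrite raddf0 ffunE.
- by rewrite phf_d cofree_pdE.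
- by rewrite hi cofree_liftE (ptr_toE _ (lexx _)) ptr_id.
- move/ffunP/(_ j0): (hp r n y).
  by rewrite cofree_mapE cofree_liftE (ptr_toE _ (lexx _)) ptr_id.
Qed.
End ConeFactorization.

Lemma Cof_Jgen_Igen (A B : pcc R) (i : phom A B) : Cof Jgen i -> Cof Igen i.
Proof. by move=> cofi X Y p /RLP_Igen_Jgen; apply: cofi. Qed.

End Persistence.

Theorem mainTheorem11 (R : realType) (A B : pcc R) (i : phom A B) :
  Cof Jgen i -> Cof Igen i /\ Wq A B i.
Proof.
move=> cofi; split; first exact: Cof_Jgen_Igen.
by move=> r; apply: qiso_at_of_Cof_Jgen.
Qed.
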